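(* Let $(k_n)_{n\ge1}$ be positive with $\sum_{j\ge1}k_j\le1$, let $a=-\sum_{j\ge1}k_j$, $\lambda_n=\sum_{j\ge n}k_j$ for $n\ge1$ and $\lambda_0:=1$, and suppose $\lambda_n^2\le\lambda_{n-1}\lambda_{n+1}$ for all $n\ge1$. Let $r$ be the discrete resolvent. Then $\Delta_n:=r_{n-1}-r_n$ ($n\ge1$) satisfies $\Delta_n=\lambda_n-\sum_{j=1}^{n-1}\lambda_{n-j}\Delta_j$, $\Delta_n\ge0$ for all $n\ge1$, so $(r_n)_{n\ge0}$ is non-increasing.
   Context: The discrete resolvent $r=(r_n)_{n\ge0}$ is the unique solution of $r_{n+1}-r_n=ar_n+\sum_{j=1}^nk_jr_{n-j}$ for $n\ge0$, $r_0=1$. *)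

From Stdlib Require Import Reals Lra Lia.
Open Scope R_scope.

Fixpoint sum1 (n : nat) (f : nat -> R) : R :=
  match n with
  | O => 0
  | S m => sum1 m f + f (S m)
  end.

Definition is_discrete_resolvent (a : R) (k : nat -> R) (r : nat -> R) : Prop :=
  r O = 1 /\
  forall n : nat, r (S n) - r n = a * r n + sum1 n (fun j => k j * r (n - j)%nat).

Definition resDelta (r : nat -> R) (n : nat) : R := r (n - 1)%nat - r n.

(* Writing k_j = lam_j - lam_{j+1} and a = -lam_1, the resolvent equation becomes the renewal
   equation lam_n = sum_{j=1}^n lam_{n-j} Delta_j (with lam_0 = 1).  Log-convexity of lam makes
   the ratios lam_{n+1}/lam_n nondecreasing, and then (Kaluza's argument) subtracting
   lam_n times the renewal equation at n+1 from lam_{n+1} times the one at n expresses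
   lam_n Delta_{n+1} as a combination of Delta_1, ..., Delta_n with nonnegative coefficients,
   so Delta_n >= 0 by induction. *)
From Stdlib Require Import Reals Lra Lia.
Open Scope R_scope.

Lemma infinite_sum_tail (f : nat -> R) (l : R) :
  infinite_sum f l -> infinite_sum (fun i => f (S i)) (l - f O).
Proof.
  intros H eps Heps. destruct (H eps Heps) as [N HN]. exists N. intros n Hn.
  assert (E : sum_f_R0 (fun i => f (S i)) n = sum_f_R0 f (S n) - f O).
  { rewrite (decomp_sum f (S n)) by lia. simpl pred. ring. }
  rewrite E. specialize (HN (S n) ltac:(lia)). unfold R_dist in *.
  replace (sum_f_R0 f (S n) - f O - (l - f O)) with (sum_f_R0 f (S n) - l) by ring.
  exact HN.
Qed.

Lemma infinite_sum_nonneg (f : nat -> R) (l : R) :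
  (forall i, 0 <= f i) -> infinite_sum f l -> 0 <= l.
Proof.
  intros Hf H. apply (@Rle_cv_lim (fun _ => 0) (fun N => sum_f_R0 f N) 0 l); auto.
  - intros; apply cond_pos_sum; auto.
  - intros eps Heps. exists O. intros. unfold R_dist. rewrite Rminus_diag, Rabs_R0. lra.
Qed.

Lemma sum1_ext (n : nat) (f g : nat -> R) :
  (forall j, (1 <= j <= n)%nat -> f j = g j) -> sum1 n f = sum1 n g.
Proof.
  induction n as [|n IH]; intros H; simpl; auto.
  rewrite IH by (intros; apply H; lia). rewrite (H (S n)) by lia. reflexivity.
Qed.

Lemma sum1_minus (n : nat) (f g : nat -> R) :
  sum1 n (fun j => f j - g j) = sum1 n f - sum1 n g.
Proof. induction n as [|n IH]; simpl; [ring | rewrite IH; ring]. Qed.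

Lemma sum1_scal (n : nat) (c : R) (f : nat -> R) :
  sum1 n (fun j => c * f j) = c * sum1 n f.
Proof. induction n as [|n IH]; simpl; [ring | rewrite IH; ring]. Qed.

Lemma sum1_nonneg (n : nat) (f : nat -> R) :
  (forall j, (1 <= j <= n)%nat -> 0 <= f j) -> 0 <= sum1 n f.
Proof.
  induction n as [|n IH]; intros H; simpl; [lra|].
  assert (0 <= sum1 n f) by (apply IH; intros; apply H; lia).
  assert (0 <= f (S n)) by (apply H; lia). lra.
Qed.

Lemma sum1_Sl (n : nat) (f : nat -> R) :
  sum1 (S n) f = f 1%nat + sum1 n (fun j => f (S j)).
Proof. induction n as [|n IH]; simpl in *; [ring | rewrite IH; ring]. Qed.

Lemma sum1_reflect (n : nat) (f : nat -> R) :
  sum1 n (fun j => f (S n - j)%nat) = sum1 n f.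
Proof.
  induction n as [|n IH]; [reflexivity|].
  rewrite sum1_Sl. change (f (S n) + sum1 n (fun j => f (S n - j)%nat) = sum1 (S n) f).
  rewrite IH. simpl. ring.
Qed.

Section TailSums.

Variables (k lam : nat -> R).
Hypothesis lam_tail : forall n, (1 <= n)%nat -> infinite_sum (fun i => k (n + i)%nat) (lam n).

Lemma tail_sum_diff (n : nat) : (1 <= n)%nat -> k n = lam n - lam (S n).
Proof.
  intros Hn.
  assert (Hsh := infinite_sum_tail _ _ (lam_tail n Hn)). cbv beta in Hsh.
  rewrite Nat.add_0_r in Hsh.
  assert (Hsh' : infinite_sum (fun i => k (S n + i)%nat) (lam n - k n)).
  { intros eps Heps. destruct (Hsh eps Heps) as [N HN]. exists N. intros m Hm.
    rewrite (sum_eq _ (fun i => k (n + S i)%nat)) by (intros; f_equal; lia). auto. }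
  assert (E := uniqueness_sum _ _ _ Hsh' (lam_tail (S n) ltac:(lia))). lra.
Qed.

Lemma tail_sum_pos (n : nat) :
  (forall j, (1 <= j)%nat -> 0 < k j) -> (1 <= n)%nat -> 0 < lam n.
Proof.
  intros Hk Hn.
  assert (0 <= lam (S n)).
  { apply (infinite_sum_nonneg (fun i => k (S n + i)%nat)); [|apply lam_tail; lia].
    intros i; left; apply Hk; lia. }
  assert (0 < k n) by auto. rewrite tail_sum_diff in * by lia. lra.
Qed.

End TailSums.

Lemma log_convex_ratio_mono (lam : nat -> R) :
  (forall n, 0 < lam n) ->
  (forall n, (1 <= n)%nat -> lam n ^ 2 <= lam (n - 1)%nat * lam (S n)) ->
  forall m d, lam (S m) * lam (m + d)%nat <= lam (S (m + d)) * lam m.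
Proof.
  intros Hpos Hconv m d. induction d as [|d IH].
  - rewrite Nat.add_0_r. lra.
  - rewrite Nat.add_succ_r. set (p := (m + d)%nat) in *.
    assert (Hl := Hconv (S p) ltac:(lia)). replace (S p - 1)%nat with p in Hl by lia.
    assert (Hp := Hpos p). assert (Hp1 := Hpos (S p)). assert (Hm := Hpos m).
    apply (Rmult_le_reg_l (lam p)); [lra|].
    apply Rle_trans with (lam (S p) ^ 2 * lam m).
    + assert (lam (S m) * lam p * lam (S p) <= lam (S p) * lam m * lam (S p))
        by (apply Rmult_le_compat_r; lra).
      simpl. lra.
    + assert (lam (S p) ^ 2 * lam m <= lam p * lam (S (S p)) * lam m)
        by (apply Rmult_le_compat_r; lra).
      lra.
Qed.

Section Renewal.

Variables (lam d : nat -> R).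
Hypothesis lam0 : lam O = 1.
Hypothesis renewal : forall n, (1 <= n)%nat -> lam n = sum1 n (fun j => lam (n - j)%nat * d j).

Lemma renewal_S (n : nat) : d (S n) = lam (S n) - sum1 n (fun j => lam (S n - j)%nat * d j).
Proof.
  rewrite (renewal (S n)) by lia. simpl sum1. rewrite Nat.sub_diag, lam0. ring.
Qed.

Lemma renewal_step (n : nat) : (1 <= n)%nat ->
  lam n * d (S n) =
  sum1 n (fun j => d j * (lam (S n) * lam (n - j)%nat - lam n * lam (S n - j)%nat)).
Proof.
  intros Hn. rewrite renewal_S.
  rewrite (sum1_ext n (fun j => d j * (lam (S n) * lam (n - j)%nat - lam n * lam (S n - j)%nat))
                      (fun j => lam (S n) * (lam (n - j)%nat * d j)
                                 - lam n * (lam (S n - j)%nat * d j))) by (intros; ring).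
  rewrite sum1_minus, !sum1_scal, <- renewal by lia. ring.
Qed.

Lemma renewal_nonneg :
  (forall n, 0 < lam n) ->
  (forall m p, lam (S m) * lam (m + p)%nat <= lam (S (m + p)) * lam m) ->
  forall n, (1 <= n)%nat -> 0 <= d n.
Proof.
  intros Hpos Hratio.
  enough (H : forall n j, (1 <= j <= n)%nat -> 0 <= d j) by (intros n Hn; apply (H n); lia).
  induction n as [|n IH]; intros j Hj; [lia|].
  destruct (Nat.eq_dec j (S n)) as [->|Hne]; [|apply IH; lia].
  destruct (Nat.eq_dec n 0) as [->|Hn0].
  - rewrite renewal_S. simpl. assert (H := Hpos 1%nat). lra.
  - assert (0 <= lam n * d (S n)).
    { rewrite renewal_step by lia. apply sum1_nonneg. intros j' Hj'.
      apply Rmult_le_pos; [apply IH; lia|].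
      assert (H := Hratio (n - j')%nat j').
      replace (n - j' + j')%nat with n in H by lia.
      replace (S n - j')%nat with (S (n - j')) by lia. lra. }
    assert (Hp := Hpos n). nra.
Qed.

End Renewal.

Section Resolvent.

Variables (a : R) (k lam r : nat -> R).
Hypothesis resolvent : is_discrete_resolvent a k r.
Hypothesis lam0 : lam O = 1.
Hypothesis a_eq : a = - lam 1%nat.
Hypothesis k_eq : forall j, (1 <= j)%nat -> k j = lam j - lam (S j).

Lemma resDelta_S (m : nat) :
  resDelta r (S m) = lam (S m) - sum1 m (fun j => lam (S m - j)%nat * resDelta r j).
Proof.
  destruct resolvent as [r0 rS].
  assert (Ea : resDelta r (S m) = lam 1%nat * r m - sum1 m (fun j => k j * r (m - j)%nat)).
  { unfold resDelta. replace (S m - 1)%nat with m by lia. specialize (rS m). rewrite a_eq in rS. lra. }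
  (* Abel summation: the telescoped k-sum and the Delta-sum both reduce to sums of lam_j r_i. *)
  assert (Eb : sum1 m (fun j => k j * r (m - j)%nat) =
               sum1 m (fun j => lam j * r (m - j)%nat)
               - sum1 m (fun j => lam (S j) * r (m - j)%nat)).
  { rewrite <- sum1_minus. apply sum1_ext. intros j Hj. rewrite k_eq by lia. ring. }
  assert (Ec : sum1 (S m) (fun j => lam j * r (S m - j)%nat) =
               lam 1%nat * r m + sum1 m (fun j => lam (S j) * r (m - j)%nat)).
  { rewrite sum1_Sl. replace (S m - 1)%nat with m by lia. reflexivity. }
  assert (Ed : sum1 m (fun j => lam (S m - j)%nat * resDelta r j) =
               sum1 m (fun j => lam j * r (m - j)%nat)
               - sum1 m (fun j => lam j * r (S m - j)%nat)).
  { rewrite <- sum1_minus.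
    rewrite <- (sum1_reflect m (fun j => lam j * r (m - j)%nat - lam j * r (S m - j)%nat)).
    apply sum1_ext. intros j Hj. unfold resDelta.
    replace (S m - (S m - j))%nat with j by lia.
    replace (m - (S m - j))%nat with (j - 1)%nat by lia. ring. }
  assert (Ee : sum1 (S m) (fun j => lam j * r (S m - j)%nat) =
               sum1 m (fun j => lam j * r (S m - j)%nat) + lam (S m)).
  { simpl sum1. rewrite Nat.sub_diag, r0. ring. }
  lra.
Qed.

Lemma resDelta_renewal (n : nat) : (1 <= n)%nat ->
  lam n = sum1 n (fun j => lam (n - j)%nat * resDelta r j).
Proof.
  intros Hn. destruct n as [|m]; [lia|].
  change (lam (S m) = sum1 m (fun j => lam (S m - j)%nat * resDelta r j)
                     + lam (S m - S m)%nat * resDelta r (S m)).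
  rewrite Nat.sub_diag, lam0, (resDelta_S m). ring.
Qed.

End Resolvent.

Theorem mainTheorem10
  (k : nat -> R) (K a : R) (lam : nat -> R) (r : nat -> R)
  (hkpos : forall j : nat, (1 <= j)%nat -> 0 < k j)
  (hK : infinite_sum (fun i => k (S i)) K)
  (hK1 : K <= 1)
  (ha : a = - K)
  (hlam0 : lam O = 1)
  (hlam : forall n : nat, (1 <= n)%nat -> infinite_sum (fun i => k (n + i)%nat) (lam n))
  (hlogconv : forall n : nat, (1 <= n)%nat -> lam n ^ 2 <= lam (n - 1)%nat * lam (S n))
  (hr : is_discrete_resolvent a k r) :
  (forall n : nat, (1 <= n)%nat ->
     resDelta r n = lam n - sum1 (n - 1) (fun j => lam (n - j)%nat * resDelta r j)) /\
  (forall n : nat, (1 <= n)%nat -> 0 <= resDelta r n) /\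
  (forall n : nat, r (S n) <= r n).
Proof.
  assert (hKlam : K = lam 1%nat) by exact (uniqueness_sum _ _ _ hK (hlam 1%nat ltac:(lia))).
  assert (ha' : a = - lam 1%nat) by lra.
  assert (hk := tail_sum_diff k lam hlam).
  assert (hlampos : forall n, 0 < lam n).
  { intros [|n]; [lra|]. apply (tail_sum_pos k); auto; lia. }
  assert (hDelta := renewal_nonneg lam (resDelta r) hlam0
                      (resDelta_renewal a k lam r hr hlam0 ha' hk) hlampos
                      (log_convex_ratio_mono lam hlampos hlogconv)).
  split; [|split].
  - intros [|m] Hm; [lia|]. replace (S m - 1)%nat with m by lia.
    exact (resDelta_S a k lam r hr ha' hk m).
  - exact hDelta.
  - intros n. assert (H := hDelta (S n) ltac:(lia)). unfold resDelta in H.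
    replace (S n - 1)%nat with n in H by lia. lra.
Qed.
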